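(* In the category $\mathbf{Pos}$ of posets, any retract (in the arrow category) of a Dwyer map is a Dwyer map.
   Context: Posets are regarded as categories with a morphism $x\to y$ iff $x\le y$. A full subposet $S\subseteq C$ is a sieve if $c\le s$ with $s\in S$ implies $c\in S$, and a cosieve if $s\le c$ with $s\in S$ implies $c\in S$. A map $k\colon S\to C$ of posets is a Dwyer map if $k$ is the inclusion of a sieve and factors as $S\xrightarrow{i}T\xrightarrow{j}C$, where $j$ is the inclusion of a cosieve and $i$ is an inclusion having a right adjoint $r\colon T\to S$ (i.e. $i(s)\le t\iff s\le r(t)$) with $r\circ i=\mathrm{id}_S$. *)

From Stdlib Require Import Classical.

Record Poset := {
  carrier :> Type;
  le : carrier -> carrier -> Prop;
  le_refl : forall x, le x x;
  le_trans : forall x y z, le x y -> le y z -> le x z;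
  le_antisym : forall x y, le x y -> le y x -> x = y
}.

Arguments le {p} _ _.

Definition monotone {P Q : Poset} (f : P -> Q) : Prop :=
  forall x y, le x y -> le (f x) (f y).

(* Full subposets of C are given by predicates on C. *)
Definition is_sieve {C : Poset} (S : C -> Prop) : Prop :=
  forall c s, S s -> le c s -> S c.

Definition is_cosieve {C : Poset} (S : C -> Prop) : Prop :=
  forall s c, S s -> le s c -> S c.

(* k is (isomorphic onto) the inclusion of a full subposet:
   an order embedding, i.e. k x <= k y <-> x <= y (hence injective). *)
Definition full_embedding {S C : Poset} (k : S -> C) : Prop :=
  forall x y, le (k x) (k y) <-> le x y.

Definition image {S C : Poset} (k : S -> C) : C -> Prop :=
  fun c => exists s, k s = c.

Definition sieve_inclusion {S C : Poset} (k : S -> C) : Prop :=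
  full_embedding k /\ is_sieve (image k).

(* Dwyer map: k is the inclusion of a sieve and factors as S -i-> T -j-> C
   with T a cosieve of C (given by a predicate T), i the corestriction of k
   (so k s in T for all s), and r : T -> S a monotone right adjoint of i
   with r o i = id. *)
Definition Dwyer {S C : Poset} (k : S -> C) : Prop :=
  monotone k /\ sieve_inclusion k /\
  exists (T : C -> Prop) (HT : forall s, T (k s)) (r : {c : C | T c} -> S),
    is_cosieve T /\
    (forall t t' : {c : C | T c}, le (proj1_sig t) (proj1_sig t') -> le (r t) (r t')) /\
    (forall (s : S) (t : {c : C | T c}), le (k s) (proj1_sig t) <-> le s (r t)) /\
    (forall s : S, r (exist _ (k s) (HT s)) = s).

Definition arrow_retract {S' C' S C : Poset} (k' : S' -> C') (k : S -> C) : Prop :=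
  monotone k' /\ monotone k /\
  exists (a : S' -> S) (b : S -> S') (c : C' -> C) (d : C -> C'),
    monotone a /\ monotone b /\ monotone c /\ monotone d /\
    (forall x, b (a x) = x) /\ (forall y, d (c y) = y) /\
    (forall x, k (a x) = c (k' x)) /\ (forall x, k' (b x) = d (k x)).

(* The Dwyer structure of k is transported along the retraction: the image of
   k' is a sieve and k' an embedding because c and a embed k' into k, the
   cosieve for k' is the preimage of the cosieve for k under c, and the right
   adjoint for k' is t |-> b (r (c t)). *)
From Stdlib Require Import ProofIrrelevance.

Lemma cosieve_preimage {P Q : Poset} (f : P -> Q) (T : Q -> Prop) :
  monotone f -> is_cosieve T -> is_cosieve (fun x => T (f x)).
Proof. intros mf cosT s x Hs Hsx. exact (cosT _ _ Hs (mf _ _ Hsx)). Qed.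

Lemma sig_fun_exist_irrelevant {A X : Type} (T : A -> Prop)
  (r : {x : A | T x} -> X) (x : A) (p q : T x) :
  r (exist _ x p) = r (exist _ x q).
Proof. now rewrite (proof_irrelevance _ p q). Qed.

Section ArrowRetract.

Context {S' C' S C : Poset}.
Variables (k' : S' -> C') (k : S -> C).
Variables (a : S' -> S) (b : S -> S') (c : C' -> C) (d : C -> C').
Hypotheses (mono_k' : monotone k') (mono_b : monotone b)
  (mono_c : monotone c) (mono_d : monotone d).
Hypotheses (ba : forall x, b (a x) = x) (dc : forall y, d (c y) = y).
Hypotheses (square_a : forall x, k (a x) = c (k' x))
  (square_b : forall x, k' (b x) = d (k x)).

Lemma retract_full_embedding : full_embedding k -> full_embedding k'.
Proof.
  intros emb_k x y; split; [|apply mono_k'].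
  intros Hxy.
  rewrite <- (ba x), <- (ba y).
  apply mono_b, emb_k.
  rewrite !square_a.
  exact (mono_c _ _ Hxy).
Qed.

Lemma retract_sieve_image : is_sieve (image k) -> is_sieve (image k').
Proof.
  intros sieve_k y s [x <-] Hyx.
  assert (Hk : le (c y) (k (a x))) by (rewrite square_a; exact (mono_c _ _ Hyx)).
  destruct (sieve_k _ _ (ex_intro _ (a x) eq_refl) Hk) as [z Hz].
  exists (b z).
  now rewrite square_b, Hz, dc.
Qed.

Variables (T : C -> Prop) (HT : forall s, T (k s)) (r : {y : C | T y} -> S).
Hypotheses (mono_r : forall t t', le (proj1_sig t) (proj1_sig t') -> le (r t) (r t'))
  (adj_r : forall s t, le (k s) (proj1_sig t) <-> le s (r t))
  (r_k : forall s, r (exist _ (k s) (HT s)) = s).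

Definition retract_cosieve (y : C') : Prop := T (c y).

Lemma retract_cosieve_k' (x : S') : retract_cosieve (k' x).
Proof. unfold retract_cosieve. rewrite <- square_a. apply HT. Qed.

Definition retract_adjoint (t : {y : C' | retract_cosieve y}) : S' :=
  b (r (exist _ (c (proj1_sig t)) (proj2_sig t))).

Lemma retract_adjoint_monotone (t t' : {y : C' | retract_cosieve y}) :
  le (proj1_sig t) (proj1_sig t') -> le (retract_adjoint t) (retract_adjoint t').
Proof. intros H. apply mono_b, mono_r, mono_c, H. Qed.

Lemma k_r_le (t : {y : C | T y}) : le (k (r t)) (proj1_sig t).
Proof. apply adj_r, le_refl. Qed.

Lemma retract_adjoint_spec (x : S') (t : {y : C' | retract_cosieve y}) :
  le (k' x) (proj1_sig t) <-> le x (retract_adjoint t).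
Proof.
  destruct t as [y Hy]; unfold retract_adjoint; simpl; split.
  - intros Hxy.
    rewrite <- (ba x).
    apply mono_b, (adj_r (a x) (exist _ (c y) Hy)); simpl.
    rewrite square_a; exact (mono_c _ _ Hxy).
  - intros Hx.
    apply (le_trans _ _ _ _ (mono_k' _ _ Hx)).
    rewrite square_b.
    apply (le_trans _ _ (d (c y))); [|rewrite dc; apply le_refl].
    apply mono_d, (k_r_le (exist _ (c y) Hy)).
Qed.

Lemma retract_adjoint_k' (x : S') :
  retract_adjoint (exist _ (k' x) (retract_cosieve_k' x)) = x.
Proof.
  assert (r_at_k : forall y (p : T y), y = k (a x) -> r (exist _ y p) = a x).
  { intros y p ->. rewrite <- (r_k (a x)) at 2. apply sig_fun_exist_irrelevant. }
  unfold retract_adjoint; simpl.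
  rewrite r_at_k; [apply ba | symmetry; apply square_a].
Qed.

End ArrowRetract.

Theorem lemma3p10 (S' C' S C : Poset) (k' : S' -> C') (k : S -> C) :
  arrow_retract k' k -> Dwyer k -> Dwyer k'.
Proof.
  intros [mk' [_ [a [b [c [d [_ [mb [mc [md [ba [dc [ka kb]]]]]]]]]]]]].
  intros [_ [[emb_k sieve_k] [T [HT [r [cos [mr [adj rk]]]]]]]].
  split; [exact mk'|]; split; [split|].
  - eapply retract_full_embedding; eassumption.
  - eapply retract_sieve_image; eassumption.
  - exists (retract_cosieve c T), (retract_cosieve_k' _ _ _ _ ka _ HT),
      (retract_adjoint b c T r).
    split; [|split; [|split]].
    + exact (cosieve_preimage c T mc cos).
    + eapply retract_adjoint_monotone; eassumption.
    + eapply retract_adjoint_spec; eassumption.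
    + eapply retract_adjoint_k'; eassumption.
Qed.
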